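(* Let $V_{\mathrm{total}}\ge0$, $B_{\mathrm{total}}>0$, $R^S_{\mathrm{total}}>0$, $F_{\mathrm{total}}>0$. Problem (P2): minimize $\max_uT_u^{\eta\text{-opt}}(B_u,R_u^S,F_u)$ over $B_u>0$, $R_u^S>0$, $F_u>0$ ($u=1,\dots,U$) subject to $\sum_uV_u^{\eta\text{-opt}}(B_u,R_u^S,F_u)\le V_{\mathrm{total}}$, $\sum_uB_u\le B_{\mathrm{total}}$, $\sum_uR_u^S\le R^S_{\mathrm{total}}$, $\sum_uF_u\le F_{\mathrm{total}}$. Problem (P3): minimize $\max_u\frac{D_u}{B_ur_u}$ over $B_u\ge0$, $R_u^S\ge0$, $F_u\ge0$ subject to $\sum_uB_u\le B_{\mathrm{total}}$, $\sum_uR_u^S\le R^S_{\mathrm{total}}$, $\sum_uF_u\le F_{\mathrm{total}}$, $R_u^S\le B_ur_u\le\frac{R_u^S}{\zeta_u}$ for all $u$, and $\frac{F_u}{\rho_u}=\frac{B_ur_u-R_u^S}{1-\zeta_u}$ for all $u$ (with the convention $D_u/0=+\infty$). Then the optimal values (infima) of (P2) and (P3) are equal.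
   Context: There are users $u=1,\dots,U$, each with constants $D_u>0$, $r_u>0$, $\rho_u>0$, $\zeta_u\in(0,1)$. The functions $T_u^{\eta\text{-opt}}(B_u,R_u^S,F_u)$ and $V_u^{\eta\text{-opt}}(B_u,R_u^S,F_u)$ (for $B_u,R_u^S,F_u>0$) are defined by six exhaustive cases (with $c_u=B_ur_u$): 1. $c_u<R_u^S$: $T^{\eta\text{-opt}}_u=\frac{D_u}{c_u}$, $V^{\eta\text{-opt}}_u=0$. 2. $R_u^S\le c_u<\frac{R_u^S}{\zeta_u}$, $\frac{F_u}{\rho_u}<\frac{c_u-R_u^S}{1-\zeta_u}$: $T^{\eta\text{-opt}}_u=\frac{D_u\rho_u}{F_u(1-\zeta_u)+\rho_uR_u^S}$, $V^{\eta\text{-opt}}_u=\frac{D_u}{c_u}[c_u-R_u^S-(1-\zeta_u)\frac{F_u}{\rho_u}]$. 3. $R_u^S\le c_u<\frac{R_u^S}{\zeta_u}$, $\frac{F_u}{\rho_u}\ge\frac{c_u-R_u^S}{1-\zeta_u}$: $T^{\eta\text{-opt}}_u=\frac{D_u}{c_u}$, $V^{\eta\text{-opt}}_u=0$. 4. $c_u\ge\frac{R_u^S}{\zeta_u}$, $\frac{F_u}{\rho_u}<\frac{R_u^S}{\zeta_u}$: $T^{\eta\text{-opt}}_u=\frac{D_u\rho_u}{F_u(1-\zeta_u)+\rho_uR_u^S}$, $V^{\eta\text{-opt}}_u=\frac{D_u}{c_u}[c_u-R_u^S-(1-\zeta_u)\frac{F_u}{\rho_u}]$. 5. $c_u\ge\frac{R_u^S}{\zeta_u}$,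 $\frac{R_u^S}{\zeta_u}\le\frac{F_u}{\rho_u}<c_u$: $T^{\eta\text{-opt}}_u=\frac{\zeta_uD_u}{R_u^S}$, $V^{\eta\text{-opt}}_u=\frac{D_u}{c_u}[c_u-R_u^S-(1-\zeta_u)\frac{F_u}{\rho_u}]$. 6. $c_u\ge\frac{R_u^S}{\zeta_u}$, $\frac{F_u}{\rho_u}\ge c_u$: $T^{\eta\text{-opt}}_u=\frac{\zeta_uD_u}{R_u^S}$, $V^{\eta\text{-opt}}_u=\frac{D_u}{c_u}(\zeta_uc_u-R_u^S)$. *)

From HB Require Import structures.
From mathcomp Require Import all_boot all_order all_algebra.
From mathcomp Require Import all_classical all_reals ereal.
Set Implicit Arguments. Unset Strict Implicit. Unset Printing Implicit Defensive.
Import Order.TTheory GRing.Theory Num.Theory.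
Local Open Scope ring_scope.

Section Defs.
Variable R : realType.

Definition T_opt (D r rho zeta B RS F : R) : R :=
  let c := B * r in
  if c < RS then D / c
  else if c < RS / zeta then
    (if F / rho < (c - RS) / (1 - zeta)
     then D * rho / (F * (1 - zeta) + rho * RS)
     else D / c)
  else if F / rho < RS / zeta then D * rho / (F * (1 - zeta) + rho * RS)
  else if F / rho < c then zeta * D / RS
  else zeta * D / RS.

Definition V_opt (D r rho zeta B RS F : R) : R :=
  let c := B * r in
  if c < RS then 0
  else if c < RS / zeta then
    (if F / rho < (c - RS) / (1 - zeta)
     then D / c * (c - RS - (1 - zeta) * (F / rho))
     else 0)
  else if F / rho < RS / zeta then D / c * (c - RS - (1 - zeta) * (F / rho))
  else if F / rho < c then D / c * (c - RS - (1 - zeta) * (F / rho))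
  else D / c * (zeta * c - RS).

Definition ediv_inf (D c : R) : \bar R :=
  if c == 0 then +oo%E else (D / c)%:E.

End Defs.

(* Every feasible allocation of (P2) has per-user delay T_u = D_u / e_u, where the effective
   rate e_u is bounded by the uplink rate B_u r_u, by R^S_u / zeta_u and by
   R^S_u + (1 - zeta_u) F_u / rho_u.  Allocating B_u = e_u / r_u and splitting e_u between
   server rate and computation gives a feasible point of (P3) with the same value, so
   inf (P3) <= inf (P2).  Conversely, on a feasible point of (P3) the computation exactly
   matches the offloaded rate, so T_u = D_u / (B_u r_u) and V_u = 0; shrinking the point by a
   factor l < 1 frees budget to make every F_u strictly positive while the value only grows
   by a factor 1 / l, which tends to 1.  Hence inf (P2) <= inf (P3). *)
From HB Require Import structures.
From mathcomp Require Import all_boot all_order all_algebra.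
From mathcomp Require Import all_classical all_reals ereal.
From mathcomp Require Import ring lra.
Set Implicit Arguments. Unset Strict Implicit. Unset Printing Implicit Defensive.
Import Order.TTheory GRing.Theory Num.Theory.
Local Open Scope classical_set_scope.
Local Open Scope ring_scope.

Section UserDelay.
Variable R : realType.
Variables D r rho z : R.
Hypotheses (D_gt0 : 0 < D) (r_gt0 : 0 < r) (rho_gt0 : 0 < rho) (z_in01 : 0 < z < 1).
Implicit Types B RS F : R.

Lemma div_compute_rate F RS :
  D * rho / (F * (1 - z) + rho * RS) = D / (RS + (1 - z) * (F / rho)).
Proof.
have -> : RS + (1 - z) * (F / rho) = (F * (1 - z) + rho * RS) / rho.
  by field; rewrite gt_eqF.
by rewrite invf_div mulrA.
Qed.

Lemma div_server_rate RS : z * D / RS = D / (RS / z).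
Proof. by rewrite invf_div mulrA (mulrC D). Qed.

Lemma T_opt_eq_div_rate B RS F : 0 < B -> 0 < RS -> 0 < F ->
  exists2 e, 0 < e & T_opt D r rho z B RS F = D / e /\
    [/\ e <= B * r, e <= RS / z & e <= RS + (1 - z) * (F / rho)].
Proof.
move=> B_gt0 RS_gt0 F_gt0; case/andP: z_in01 => z_gt0 z_lt1.
rewrite /T_opt div_compute_rate div_server_rate.
have c_gt0 : 0 < B * r by rewrite mulr_gt0.
have f_gt0 : 0 < F / rho by rewrite divr_gt0.
have s_gt0 : 0 < RS / z by rewrite divr_gt0.
set c := B * r in c_gt0 *; set f := F / rho in f_gt0 *; set s := RS / z in s_gt0 *.
have RS_eq : RS = s * z by rewrite /s divfK ?gt_eqF.
have z1_gt0 : 0 < 1 - z by rewrite subr_gt0.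
have compute_gt0 : 0 < RS + (1 - z) * f by rewrite addr_gt0 // mulr_gt0.
case: ltP => [c_lt_RS|RS_le_c].
  by exists c => //; split => //; split; nra.
case: ltP => [c_lt_s|s_le_c].
  case: ltP => [|]; [rewrite ltr_pdivlMr // => f_lt | rewrite ler_pdivrMr // => f_ge].
    by exists (RS + (1 - z) * f) => //; split => //; split; nra.
  by exists c => //; split => //; split; nra.
case: ltP => [f_lt_s|s_le_f].
  by exists (RS + (1 - z) * f) => //; split => //; split; nra.
by case: ltP => _; exists s => //; split => //; split; nra.
Qed.

Lemma T_opt_rate_bounds B RS F : 0 < B -> 0 < RS -> 0 < F ->
  0 < T_opt D r rho z B RS F /\
  [/\ D / T_opt D r rho z B RS F <= B * r, D / T_opt D r rho z B RS F <= RS / z &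
      D / T_opt D r rho z B RS F <= RS + (1 - z) * (F / rho)].
Proof.
move=> B_gt0 RS_gt0 F_gt0.
have [e e_gt0 [-> bounds]] := T_opt_eq_div_rate B_gt0 RS_gt0 F_gt0.
by rewrite divr_gt0 // divKf // gt_eqF.
Qed.

Lemma T_V_opt_compute_sufficient B RS F : 0 < B * r ->
  RS <= B * r <= RS / z -> (B * r - RS) / (1 - z) <= F / rho ->
  T_opt D r rho z B RS F = D / (B * r) /\ V_opt D r rho z B RS F = 0.
Proof.
move=> c_gt0 /andP[RS_le_c c_le_s]; case/andP: z_in01 => z_gt0 z_lt1.
have z1_gt0 : 0 < 1 - z by rewrite subr_gt0.
rewrite /T_opt /V_opt div_server_rate ler_pdivrMr //.
set c := B * r in c_gt0 RS_le_c c_le_s *; set f := F / rho; set s := RS / z in c_le_s *.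
move=> compute_enough; rewrite ltNge RS_le_c /=.
case: ltP => [_|s_le_c]; first by rewrite ltNge ler_pdivrMr // compute_enough.
have c_eq_s : c = s by apply/le_anti; rewrite c_le_s s_le_c.
have RS_eq : RS = s * z by rewrite /s divfK ?gt_eqF.
have [c_le_f s_le_f] : c <= f /\ s <= f by split; nra.
rewrite !ltNge s_le_f c_le_f /= -c_eq_s; split => //.
by rewrite (_ : z * c - RS = 0) ?mulr0 // c_eq_s RS_eq; ring.
Qed.

Lemma T_V_opt_shrink B RS F l d : 0 < B * r ->
  RS <= B * r <= RS / z -> F / rho = (B * r - RS) / (1 - z) -> 0 < l -> 0 <= d ->
  T_opt D r rho z (l * B) (l * RS) (l * F + d) = D / (l * (B * r)) /\
  V_opt D r rho z (l * B) (l * RS) (l * F + d) = 0.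
Proof.
move=> c_gt0 /andP[RS_le_c c_le_s] F_eq l_gt0 d_ge0.
have z1_gt0 : 0 < 1 - z by case/andP: z_in01 => _; rewrite subr_gt0.
rewrite (mulrA l B r); apply: T_V_opt_compute_sufficient.
- by rewrite -mulrA mulr_gt0.
- by rewrite -!mulrA !ler_pM2l // RS_le_c.
- have -> : (l * B * r - l * RS) / (1 - z) = l * (F / rho).
    by rewrite F_eq; field; rewrite gt_eqF.
  have -> : (l * F + d) / rho = l * (F / rho) + d / rho by field; rewrite gt_eqF.
  by rewrite lerDl divr_ge0 // ltW.
Qed.

End UserDelay.

Lemma min_rate_split (R : realType) (z e RS f : R) : 0 < z < 1 -> 0 < e -> 0 <= RS ->
  0 <= f -> e <= RS / z -> e <= RS + (1 - z) * f ->
  let S := Num.min e RS in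
  [/\ 0 <= S <= RS, S <= e <= S / z & 0 <= e - S <= (1 - z) * f].
Proof.
move=> /andP[z_gt0 z_lt1] e_gt0 RS_ge0 f_ge0.
rewrite ler_pdivlMr // => e_le_s e_le_compute S.
have [e_le_RS|RS_lt_e] := leP e RS; rewrite /S.
  by rewrite min_l //; split; apply/andP; split; rewrite ?ler_pdivlMr //; nra.
rewrite min_r; last exact: ltW.
by split; apply/andP; split; rewrite ?ler_pdivlMr //; nra.
Qed.

Lemma shrink_div_le (R : realType) (a K e : R) : 0 <= a <= K -> 0 < K -> 0 < e ->
  a / (K / (K + e)) <= a + e.
Proof.
move=> /andP[a_ge0 a_le_K] K_gt0 e_gt0.
by rewrite invf_div mulrA ler_pdivrMr //; nra.
Qed.

Section Problems.
Variable R : realType.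
Variable U : nat.
Variables D r rho zeta : 'I_U -> R.
Hypotheses (D_gt0 : forall u, 0 < D u) (r_gt0 : forall u, 0 < r u)
  (rho_gt0 : forall u, 0 < rho u) (zeta_in01 : forall u, 0 < zeta u < 1).
Variables Vtot Btot RStot Ftot : R.
Hypotheses (Vtot_ge0 : 0 <= Vtot) (Ftot_gt0 : 0 < Ftot).

Definition P2_values : set (\bar R) :=
  [set x : \bar R | exists B RS F : 'I_U -> R,
      (forall u, 0 < B u /\ 0 < RS u /\ 0 < F u) /\
      \sum_(u < U) V_opt (D u) (r u) (rho u) (zeta u) (B u) (RS u) (F u) <= Vtot /\
      \sum_(u < U) B u <= Btot /\
      \sum_(u < U) RS u <= RStot /\
      \sum_(u < U) F u <= Ftot /\
      x = \big[Order.max/-oo%E]_(u < U)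
            (T_opt (D u) (r u) (rho u) (zeta u) (B u) (RS u) (F u))%:E].

Definition P3_values : set (\bar R) :=
  [set x : \bar R | exists B RS F : 'I_U -> R,
      (forall u, 0 <= B u /\ 0 <= RS u /\ 0 <= F u) /\
      \sum_(u < U) B u <= Btot /\
      \sum_(u < U) RS u <= RStot /\
      \sum_(u < U) F u <= Ftot /\
      (forall u, RS u <= B u * r u <= RS u / zeta u) /\
      (forall u, F u / rho u = (B u * r u - RS u) / (1 - zeta u)) /\
      x = \big[Order.max/-oo%E]_(u < U) ediv_inf (D u) (B u * r u)].

Lemma one_sub_zeta_gt0 u : 0 < 1 - zeta u.
Proof. by case/andP: (zeta_in01 u) => _; rewrite subr_gt0. Qed.

Lemma P2_values_sub_P3 : P2_values `<=` P3_values.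
Proof.
move=> _ [B [RS [F [pos [_ [sumB [sumRS [sumF ->]]]]]]]].
pose T u := T_opt (D u) (r u) (rho u) (zeta u) (B u) (RS u) (F u).
pose e u := D u / T u.
pose RS1 u := Num.min (e u) (RS u).
have user u : [/\ 0 < T u, 0 < e u, e u <= B u * r u &
    [/\ 0 <= RS1 u <= RS u, RS1 u <= e u <= RS1 u / zeta u &
        0 <= e u - RS1 u <= (1 - zeta u) * (F u / rho u)]].
  have [B_gt0 [RS_gt0 F_gt0]] := pos u.
  have [T_gt0 [e_le_c e_le_s e_le_compute]] :=
    T_opt_rate_bounds (D_gt0 u) (r_gt0 u) (rho_gt0 u) (zeta_in01 u) B_gt0 RS_gt0 F_gt0.
  have e_gt0 : 0 < e u by rewrite divr_gt0.
  split => //; apply: min_rate_split => //; first exact: ltW.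
  by rewrite divr_ge0 ?ltW.
exists (fun u => e u / r u), RS1, (fun u => rho u * (e u - RS1 u) / (1 - zeta u)).
have rho_neq0 u : rho u != 0 by rewrite gt_eqF.
have r_neq0 u : r u != 0 by rewrite gt_eqF.
split.
  move=> u; have [_ e_gt0 _ [/andP[RS1_ge0 _] _ /andP[e_RS1_ge0 _]]] := user u.
  split; first by rewrite divr_ge0 ?ltW.
  split; first exact: RS1_ge0.
  apply: divr_ge0; last exact/ltW/one_sub_zeta_gt0.
  exact: mulr_ge0 (ltW (rho_gt0 u)) e_RS1_ge0.
split.
  apply: le_trans sumB; apply: ler_sum => u _.
  by have [_ _ e_le_c _] := user u; rewrite ler_pdivrMr.
split.
  apply: le_trans sumRS; apply: ler_sum => u _.
  by have [_ _ _ [/andP[_ RS1_le_RS] _ _]] := user u.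
split.
  apply: le_trans sumF; apply: ler_sum => u _.
  have [_ _ _ [_ _ /andP[_ e_RS1_le]]] := user u.
  have z1_gt0 := one_sub_zeta_gt0 u; have rho_u_gt0 := rho_gt0 u.
  have F_eq : F u = F u / rho u * rho u by rewrite divfK.
  by rewrite ler_pdivrMr // [in leRHS]F_eq; nra.
split.
  by move=> u; rewrite divfK //; have [_ _ _ [_ ? _]] := user u.
split.
  by move=> u; rewrite divfK //; field; rewrite rho_neq0 gt_eqF ?one_sub_zeta_gt0.
apply: eq_bigr => u _; have [T_gt0 e_gt0 _ _] := user u.
by rewrite /ediv_inf divfK // gt_eqF //= /e divKf // gt_eqF.
Qed.

Lemma P3_shrink_in_P2 (B RS F : 'I_U -> R) l :
  (forall u, 0 < B u) -> (forall u, 0 <= RS u /\ 0 <= F u) ->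
  \sum_(u < U) B u <= Btot -> \sum_(u < U) RS u <= RStot -> \sum_(u < U) F u <= Ftot ->
  (forall u, RS u <= B u * r u <= RS u / zeta u) ->
  (forall u, F u / rho u = (B u * r u - RS u) / (1 - zeta u)) ->
  0 < l < 1 ->
  P2_values (\big[Order.max/-oo%E]_(u < U) (D u / (l * (B u * r u)))%:E).
Proof.
move=> B_gt0 RS_F_ge0 sumB sumRS sumF range F_eq /andP[l_gt0 l_lt1].
(* The freed computation budget is shared equally; for U = 0 the junk value d = 0 is harmless. *)
pose d := (1 - l) * Ftot / U%:R.
have d_ge0 : 0 <= d by rewrite divr_ge0 ?mulr_ge0 // ltW // subr_gt0.
have c_gt0 u : 0 < B u * r u by rewrite mulr_gt0.
have shrink u := T_V_opt_shrink (D u) (rho_gt0 u) (zeta_in01 u) (c_gt0 u) (range u)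
  (F_eq u) l_gt0 d_ge0.
have sum_shrink (x : 'I_U -> R) : (forall u, 0 <= x u) ->
    \sum_(u < U) l * x u <= \sum_(u < U) x u.
  by move=> x_ge0; rewrite -mulr_sumr ler_piMl ?sumr_ge0 // ltW.
exists (fun u => l * B u), (fun u => l * RS u), (fun u => l * F u + d).
split.
  move=> u; have [RS_ge0 F_ge0] := RS_F_ge0 u.
  have [z_gt0 _] := andP (zeta_in01 u).
  have RS_gt0 : 0 < RS u.
    have := lt_le_trans (c_gt0 u) (proj2 (andP (range u))).
    by rewrite pmulr_lgt0 // invr_gt0.
  have U_gt0 : (0 < U)%N by apply: leq_ltn_trans (ltn_ord u).
  have d_gt0 : 0 < d by rewrite divr_gt0 ?ltr0n ?mulr_gt0 // subr_gt0.
  by rewrite !mulr_gt0 // ltr_wpDl // mulr_ge0 // ltW.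
split.
  by rewrite big1 // => u _; case: (shrink u).
split; first by apply: le_trans sumB; apply: sum_shrink => u; exact/ltW.
split; first by apply: le_trans sumRS; apply: sum_shrink => u; case: (RS_F_ge0 u).
split.
  rewrite big_split /= sumr_const card_ord.
  have d_sum : d *+ U <= (1 - l) * Ftot.
    rewrite -mulr_natr /d; have [->|U_gt0] := posnP U.
      by rewrite mulr0 mulr_ge0 // ltW // subr_gt0.
    by rewrite divfK // pnatr_eq0 -lt0n.
  have := sum_shrink F (fun u => (RS_F_ge0 u).2).
  have : 0 <= \sum_(u < U) F u by apply: sumr_ge0 => u _; case: (RS_F_ge0 u).
  rewrite -mulr_sumr; nra.
by apply: eq_bigr => u _; case: (shrink u) => ->.
Qed.

Lemma ereal_inf_P2_le_P3 : (ereal_inf P2_values <= ereal_inf P3_values)%E.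
Proof.
apply/ereal_infP => _ [B [RS [F [pos [sumB [sumRS [sumF [range [F_eq ->]]]]]]]]].
have [B_gt0|] := boolP [forall u, 0 < B u]; last first.
  rewrite negb_forall => /existsP[u]; rewrite lt_def (pos u).1 andbT negbK => /eqP B0.
  apply: le_trans (leey _) _.
  have := le_bigmax -oo%E (fun u => ediv_inf (D u) (B u * r u)) u.
  by rewrite /ediv_inf B0 mul0r eqxx.
move/forallP: B_gt0 => B_gt0.
have c_gt0 u : 0 < B u * r u by rewrite mulr_gt0.
pose a u := D u / (B u * r u).
have a_ge0 u : 0 <= a u by rewrite divr_ge0 ?ltW.
(* Shrinking by l = K / (K + e) with K >= every a u raises each delay by at most e. *)
pose K := 1 + \sum_(u < U) a u.
have a_le_K u : a u <= K.
  have rest_ge0 : 0 <= \sum_(v < U | v != u) a v by apply: sumr_ge0 => v _.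
  by rewrite /K (bigD1 u) //=; lra.
have K_gt0 : 0 < K by rewrite ltr_pwDl ?sumr_ge0.
apply/lee_addgt0Pr => e e_gt0; apply: ge_ereal_inf.
pose l := K / (K + e).
have Ke_gt0 : 0 < K + e by rewrite addr_gt0.
have l_in01 : 0 < l < 1 by rewrite /l divr_gt0 //= ltr_pdivrMr // mul1r ltrDl.
exists (\big[Order.max/-oo%E]_(u < U) (D u / (l * (B u * r u)))%:E).
  apply: (P3_shrink_in_P2 (RS := RS) (F := F)) => // u; by case: (pos u) => _ [].
apply/bigmax_leP; split => [|u _]; first by rewrite leNye.
have -> : D u / (l * (B u * r u)) = a u / l by rewrite /a [l * _]mulrC invfM mulrA.
apply: le_trans (_ : (a u + e)%:E <= _)%E.
  by rewrite lee_fin shrink_div_le ?a_ge0 ?a_le_K.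
rewrite EFinD leeD2r //; apply: le_trans (le_bigmax _ _ u).
by rewrite /ediv_inf gt_eqF.
Qed.

Lemma ereal_inf_P2_eq_P3 : ereal_inf P2_values = ereal_inf P3_values.
Proof.
apply/le_anti; rewrite ereal_inf_P2_le_P3 /=.
by apply/ereal_infP => y /P2_values_sub_P3; exact: ereal_inf_lbound.
Qed.

End Problems.

Theorem theorem3 (R : realType) (U : nat)
  (D r rho zeta : 'I_U -> R)
  (hD : forall u, 0 < D u) (hr : forall u, 0 < r u) (hrho : forall u, 0 < rho u)
  (hzeta : forall u, 0 < zeta u < 1)
  (Vtot Btot RStot Ftot : R)
  (hV : 0 <= Vtot) (hB : 0 < Btot) (hRS : 0 < RStot) (hF : 0 < Ftot) :
  ereal_inf [set x : \bar R | exists B RS F : 'I_U -> R,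
      (forall u, 0 < B u /\ 0 < RS u /\ 0 < F u) /\
      \sum_(u < U) V_opt (D u) (r u) (rho u) (zeta u) (B u) (RS u) (F u) <= Vtot /\
      \sum_(u < U) B u <= Btot /\
      \sum_(u < U) RS u <= RStot /\
      \sum_(u < U) F u <= Ftot /\
      x = \big[Order.max/-oo%E]_(u < U)
            (T_opt (D u) (r u) (rho u) (zeta u) (B u) (RS u) (F u))%:E]
  =
  ereal_inf [set x : \bar R | exists B RS F : 'I_U -> R,
      (forall u, 0 <= B u /\ 0 <= RS u /\ 0 <= F u) /\
      \sum_(u < U) B u <= Btot /\
      \sum_(u < U) RS u <= RStot /\
      \sum_(u < U) F u <= Ftot /\
      (forall u, RS u <= B u * r u <= RS u / zeta u) /\
      (forall u, F u / rho u = (B u * r u - RS u) / (1 - zeta u)) /\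
      x = \big[Order.max/-oo%E]_(u < U) ediv_inf (D u) (B u * r u)].
Proof. exact (ereal_inf_P2_eq_P3 hD hr hrho hzeta Btot RStot hV hF). Qed.
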